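(* Let $\epsilon\in(0,1/3)$ and let $A\in\mathbb{C}^{\ell\times\ell}$ be a matrix with nonnegative entries such that $A_{0,0}=1-\epsilon$ and $\sum_{i,j}A_{i,j}=1$. Then $A$ has a unique eigenvalue $\mu$ (of algebraic multiplicity one) satisfying $$|\mu-A_{0,0}|\le\frac{\epsilon^2}{1-2\epsilon},$$ and every other eigenvalue $\lambda$ of $A$ satisfies $|\lambda|\le\epsilon$. In particular, $\mu$ is the unique eigenvalue of maximal modulus and $\mu=A_{0,0}+O(\epsilon^2)$.
   Context: Rows and columns of $A$ are indexed by $0,\dots,\ell-1$. *)

From HB Require Import structures.
From mathcomp Require Import all_boot all_order all_algebra.
From mathcomp Require Import complex.
From mathcomp Require Import reals.
Set Implicit Arguments. Unset Strict Implicit. Unset Printing Implicit Defensive.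

From HB Require Import structures.
From mathcomp Require Import all_boot all_order all_algebra.
From mathcomp Require Import complex.
From mathcomp Require Import reals.
From mathcomp Require Import ring lra.
Import Order.TTheory GRing.Theory Num.Theory ComplexField Normc.
Local Open Scope ring_scope.
Local Open Scope complex_scope.

Set Implicit Arguments. Unset Strict Implicit. Unset Printing Implicit Defensive.

(* Work with left eigenvectors v A = lam v and an entry v_k of maximal modulus:
   the k-th column of the eigen-equation gives |lam| <= sum_i |A_ik|.  All
   entries other than A_00 = 1 - eps have total mass eps, so this is at most eps
   unless k = 0.  If k = 0, normalize v_0 = 1 and let v_k be the largest of the
   other entries: column 0 gives |lam - A_00| <= |v_k| c_0 and column k gives
   (1 - 2 eps) |v_k| <= A_0k, where c_0, the mass of column 0 below A_00,
   satisfies c_0 + A_0k <= eps; hence |lam - A_00| <= eps^2 / (1 - 2 eps).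
   An eigenvalue mu with |mu| > eps exists: otherwise, with m = n + 1 and a
   Schur triangularization, (1 - eps)^m <= tr A^m <= m eps^m < (2 eps)^m.
   Deflating A by a left eigenvector w of mu with w_0 = 1 factors
   char A = (X - mu) char C, where C_ij = A_ij - A_i0 w_j for i, j >= 1, and the
   column bound applied to C, using |mu| > eps, puts every eigenvalue of C in
   the disc of radius eps. *)

Section ComplexNorm.
Variable R : rcfType.
Implicit Types (x y z : R[i]) (r : R).

Lemma normr_normc z : `|z| = (normc z)%:C.
Proof. by case: z. Qed.

Lemma normc_ge0 z : 0 <= normc z.
Proof. by rewrite -ler0c -normr_normc. Qed.

Lemma normc_gt0 z : (0 < normc z) = (z != 0).
Proof. by rewrite -ltcR -normr_normc normr_gt0. Qed.

Lemma normcX x m : normc (x ^+ m) = normc x ^+ m.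
Proof. by apply: complexI; rewrite rmorphXn -!normr_normc normrX. Qed.

Lemma ler_normc_sum (I : Type) (s : seq I) (P : pred I) (F : I -> R[i]) :
  normc (\sum_(i <- s | P i) F i) <= \sum_(i <- s | P i) normc (F i).
Proof.
elim/big_rec2: _ => [|i r t _ IH]; first by rewrite normc0.
by apply: le_trans (le_normcD _ _) _; rewrite lerD2l.
Qed.

Lemma ler_normcC z r : (`|z| <= r%:C) = (normc z <= r).
Proof. by rewrite normr_normc lecR. Qed.

Lemma ger0_normc z : 0 <= z -> normc z = complex.Re z.
Proof.
case: z => a b; rewrite lecE /= => /andP[/eqP -> a0].
by rewrite expr0n addr0 sqrtr_sqr ger0_norm.
Qed.

Lemma lecC_normc r z : r%:C <= z -> r <= normc z.
Proof.
case: z => a b; rewrite lecE /= => /andP[/eqP -> ra].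
by rewrite expr0n addr0 sqrtr_sqr (le_trans ra) ?ler_norm.
Qed.

Lemma lerB_normc x y : normc y - normc (x - y) <= normc x.
Proof.
by rewrite lerBlDr addrC -[normc (x - y)]normcN opprB -{1}(subrK x y) le_normcD.
Qed.

End ComplexNorm.

Lemma arg_max_or_none (R : realDomainType) (I : finType) (P : pred I)
    (F : I -> R) :
  (exists2 k, P k & forall j, P j -> F j <= F k) \/ (forall j, ~~ P j).
Proof.
have [i0 Pi0|P0] := pickP P; last by right=> j; rewrite P0.
by left; case: (arg_maxP F Pi0) => k Pk kmax; exists k.
Qed.

Lemma sum_lift0 (V : zmodType) n (F : 'I_n.+1 -> V) :
  \sum_(i < n) F (lift 0 i) = \sum_(i | i != 0) F i.
Proof.
by apply: (@addrI _ (F 0)); rewrite -big_ord_recl (bigD1 0).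
Qed.

Section LeftEigenColumns.
Variables (R : comPzRingType) (n : nat).
Implicit Types (M : 'M[R]_n) (v : 'rV[R]_n) (lam : R).

Lemma left_eigen_col M v lam k :
  v *m M = lam *: v -> lam * v 0 k = \sum_i v 0 i * M i k.
Proof. by move/rowP/(_ k); rewrite !mxE => <-. Qed.

Lemma left_eigen_col_diag M v lam k : v *m M = lam *: v ->
  (lam - M k k) * v 0 k = \sum_(i | i != k) v 0 i * M i k.
Proof.
move=> /(left_eigen_col k); rewrite (bigD1 k) //= mulrBl => ->.
by rewrite mulrC addrAC subrr add0r.
Qed.

End LeftEigenColumns.

Section LeftEigenvectors.
Variables (R : rcfType) (n : nat).
Implicit Types (M : 'M[R[i]]_n) (v : 'rV[R[i]]_n) (lam : R[i]).

Lemma normc_left_eigen_col M v lam k : v *m M = lam *: v ->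
  normc lam * normc (v 0 k) <= \sum_i normc (v 0 i) * normc (M i k).
Proof.
move=> /(left_eigen_col k); rewrite -normcM => ->.
by apply: le_trans (ler_normc_sum _ _ _) _; under eq_bigr do rewrite normcM.
Qed.

Lemma normc_left_eigen_col_diag M v lam k : v *m M = lam *: v ->
  normc (lam - M k k) * normc (v 0 k) <=
    \sum_(i | i != k) normc (v 0 i) * normc (M i k).
Proof.
move=> /(left_eigen_col_diag k); rewrite -normcM => ->.
by apply: le_trans (ler_normc_sum _ _ _) _; under eq_bigr do rewrite normcM.
Qed.

Lemma eigenvalue_max_left_eigvec M lam : eigenvalue M lam ->
  exists v, exists k, [/\ v *m M = lam *: v, v 0 k != 0
                        & forall j, normc (v 0 j) <= normc (v 0 k)].
Proof.
case/eigenvalueP => v vM v_neq0.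
have [[k vk_neq0 kmax]|v_eq0] :=
  arg_max_or_none (fun j => v 0 j != 0) (fun j => normc (v 0 j)).
  exists v, k; split => // j; have [/kmax //|] := boolP (v 0 j != 0).
  by rewrite negbK => /eqP ->; rewrite normc0 normc_ge0.
by case/eqP: v_neq0; apply/rowP => j; move/negbNE/eqP: (v_eq0 j); rewrite mxE.
Qed.

Section MaxEntry.
Variables (M : 'M[R[i]]_n) (v : 'rV[R[i]]_n) (lam : R[i]) (k : 'I_n).
Hypotheses (vM : v *m M = lam *: v) (vk_neq0 : v 0 k != 0)
  (vk_max : forall j, normc (v 0 j) <= normc (v 0 k)).

Lemma normc_eigenvalue_le_col : normc lam <= \sum_i normc (M i k).
Proof.
have vk_gt0 : 0 < normc (v 0 k) by rewrite normc_gt0.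
rewrite -(ler_pM2r vk_gt0) big_distrl /=.
apply: le_trans (normc_left_eigen_col k vM) _.
by apply: ler_sum => i _; rewrite mulrC ler_wpM2l ?normc_ge0.
Qed.

Lemma left_eigvec_normalize : exists w : 'rV_n,
  [/\ w *m M = lam *: w, w 0 k = 1 & forall j, normc (w 0 j) <= 1].
Proof.
exists ((v 0 k)^-1 *: v); split.
- by rewrite -scalemxAl vM !scalerA mulrC.
- by rewrite mxE mulVf.
- move=> j; have vk_gt0 : 0 < normc (v 0 k) by rewrite normc_gt0.
  by rewrite mxE normcM normcV mulrC ler_pdivrMr // mul1r.
Qed.

End MaxEntry.

Lemma gershgorin_col M lam : eigenvalue M lam ->
  exists k, normc lam <= \sum_i normc (M i k).
Proof.
case/eigenvalue_max_left_eigvec => v [k [vM vk_neq0 vk_max]].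
by exists k; exact: normc_eigenvalue_le_col vM vk_neq0 vk_max.
Qed.

End LeftEigenvectors.

Section TriangularPowers.
Variables (R : pzSemiRingType) (n : nat).
Implicit Types X Y : 'M[R]_n.

Lemma trig_mulmx X Y : is_trig_mx X -> is_trig_mx Y -> is_trig_mx (X *m Y).
Proof.
move=> /is_trig_mxP X_trig /is_trig_mxP Y_trig.
apply/is_trig_mxP => i j ij; rewrite mxE big1 // => k _.
have [ik|ki] := ltnP i k; first by rewrite X_trig // mul0r.
by rewrite Y_trig ?mulr0 // (leq_ltn_trans ki ij).
Qed.

Lemma trig_mulmx_diag X Y i : is_trig_mx X -> is_trig_mx Y ->
  (X *m Y) i i = X i i * Y i i.
Proof.
move=> /is_trig_mxP X_trig /is_trig_mxP Y_trig.
rewrite mxE (bigD1 i) //= big1 ?addr0 // => k ki.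
have [ik|ki'|ik] := ltngtP i k; first by rewrite X_trig // mul0r.
  by rewrite Y_trig ?mulr0.
by move: ki; rewrite -val_eqE /= ik eqxx.
Qed.

End TriangularPowers.

Section TriangularExp.
Variables (R : pzSemiRingType) (n : nat) (T : 'M[R]_n.+1).
Hypothesis T_trig : is_trig_mx T.

Lemma trig_exp m : is_trig_mx (T ^+ m).
Proof.
elim: m => [|m IH]; last by rewrite exprSr -mulmxE trig_mulmx.
by apply/is_trig_mxP => i j ij; rewrite expr0 mxE -val_eqE /= ltn_eqF.
Qed.

Lemma trig_exp_diag m i : (T ^+ m) i i = T i i ^+ m.
Proof.
elim: m => [|m IH]; first by rewrite !expr0 mxE eqxx.
by rewrite !exprSr -mulmxE trig_mulmx_diag ?trig_exp // IH.
Qed.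

End TriangularExp.

Lemma exists_eigenvalue_mxtrace_exp_le (R : rcfType) n (A : 'M[R[i]]_n.+1) m :
  exists2 lam, eigenvalue A lam &
    normc (\tr (A ^+ m)) <= n.+1%:R * normc lam ^+ m.
Proof.
have [P P_unitary] := Schur A (ltn0Sn n).
have P_unit : P \in unitmx := unitarymx_unit P_unitary.
rewrite /similar_to /= conjumx //; set T := P *m A *m invmx P => T_trig.
have eigT i : eigenvalue A (T i i).
  have /eigenvalue_conjmx : stablemx P A by exact: stablemx_unit.
  rewrite row_free_unit => /(_ P_unit (T i i)); apply.
  rewrite conjumx // -/T -topredE /= eigenvalue_root_char char_poly_trig // rootE.
  by rewrite horner_prod (bigD1 i) //= hornerXsubC subrr mul0r.
have expT m' : T ^+ m' = P *m A ^+ m' *m invmx P.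
  elim: m' => [|m' IH]; first by rewrite !expr0 mulmx1 mulmxV.
  by rewrite exprSr IH [A ^+ m'.+1]exprSr -!mulmxE /T !mulmxA mulmxKV.
have -> : \tr (A ^+ m) = \sum_i T i i ^+ m.
  rewrite -(mulKmx P_unit (A ^+ m)) mxtrace_mulC -expT /mxtrace.
  by apply: eq_bigr => i _; rewrite trig_exp_diag.
have [k _ kmax] := @arg_maxP _ _ _ ord0 xpredT (fun i => normc (T i i)) isT.
exists (T k k) => //; apply: le_trans (ler_normc_sum _ _ _) _.
rewrite mulr_natl -[X in _ *+ X](card_ord n.+1) -sumr_const.
apply: ler_sum => i _; rewrite normcX.
by apply: lerXn2r; rewrite ?nnegrE ?normc_ge0 //; exact: kmax.
Qed.

Section NonnegativeMatrices.
Variables (R : numDomainType) (n : nat) (A : 'M[R]_n.+1).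
Hypothesis A_ge0 : forall i j, 0 <= A i j.

Lemma exp_mx_ge0 m i j : 0 <= (A ^+ m) i j.
Proof.
elim: m i j => [|m IH] i j; first by rewrite expr0 mxE ler0n.
by rewrite exprSr -mulmxE mxE sumr_ge0 // => k _; rewrite mulr_ge0.
Qed.

Lemma exp_mx_diag_ge m i : A i i ^+ m <= (A ^+ m) i i.
Proof.
elim: m => [|m IH]; first by rewrite !expr0 mxE eqxx.
rewrite [A ^+ m.+1]exprSr -mulmxE mxE (bigD1 i) //= exprSr.
apply: le_trans (ler_wpM2r (A_ge0 i i) IH) _.
by rewrite lerDl sumr_ge0 // => k _; rewrite mulr_ge0 ?exp_mx_ge0.
Qed.

End NonnegativeMatrices.

Lemma char_poly_similar (F : fieldType) n (S A B : 'M[F]_n) :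
  \det S != 0 -> S *m A = B *m S -> char_poly A = char_poly B.
Proof.
move=> detS SA_BS.
apply: (mulfI (_ : (\det S)%:P != 0)); first by rewrite polyC_eq0.
have : map_mx polyC S *m char_poly_mx A = char_poly_mx B *m map_mx polyC S.
  by rewrite /char_poly_mx mulmxBr mulmxBl -!map_mxM SA_BS scalar_mxC.
move/(congr1 determinant); rewrite !det_mulmx det_map_mx /= => ->.
by rewrite mulrC.
Qed.

Section Deflation.
Variables (F : fieldType) (n : nat) (A : 'M[F]_n.+1) (w : 'rV[F]_n.+1).

Definition deflate : 'M[F]_n :=
  \matrix_(i, j) (A (lift 0 i) (lift 0 j) - A (lift 0 i) 0 * w 0 (lift 0 j)).

Variable mu : F.
Hypotheses (wA : w *m A = mu *: w) (w0 : w 0 0 = 1).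

(* Conjugating A by the matrix whose first row is w and whose other rows are
   those of the identity kills row 0 off the diagonal and leaves deflate A w as
   the lower right block. *)
Definition deflation_basis : 'M[F]_n.+1 :=
  \matrix_(i, j) (if i == 0 then w 0 j else (i == j)%:R).

Definition deflation_block : 'M[F]_n.+1 := \matrix_(i, j)
  if i == 0 then (if j == 0 then mu else 0)
  else if j == 0 then A i 0 else A i j - A i 0 * w 0 j.

Lemma det_deflation_basis : \det deflation_basis = 1.
Proof.
rewrite -det_tr det_trig.
  rewrite (bigD1 0) //= big1 ?mulr1; first by rewrite !mxE eqxx w0.
  by move=> i i0; rewrite !mxE (negbTE i0) eqxx.
apply/is_trig_mxP => i j ij; rewrite !mxE.
have j0 : j != 0 by rewrite -val_eqE /= -lt0n (leq_ltn_trans _ ij).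
by rewrite (negbTE j0) -val_eqE /= gtn_eqF.
Qed.

Lemma deflation_basis_conj :
  deflation_basis *m A = deflation_block *m deflation_basis.
Proof.
apply/matrixP => i j; rewrite !mxE.
have [->|i0] := eqVneq i 0.
  transitivity (mu * w 0 j).
    by rewrite (left_eigen_col j wA); apply: eq_bigr => k _; rewrite !mxE eqxx.
  rewrite (bigD1 0) //= big1 ?addr0; first by rewrite !mxE !eqxx.
  by move=> k k0; rewrite !mxE eqxx (negbTE k0) mul0r.
transitivity (A i j).
  rewrite (bigD1 i) //= big1 ?addr0; first by rewrite !mxE (negbTE i0) eqxx mul1r.
  by move=> k ki; rewrite !mxE (negbTE i0) eq_sym (negbTE ki) mul0r.
rewrite (bigD1 0) //= !mxE (negbTE i0) eqxx.
have [->|j0] := eqVneq j 0.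
  rewrite w0 mulr1 big1 ?addr0 // => k k0.
  by rewrite !mxE (negbTE i0) (negbTE k0) mulr0.
rewrite (bigD1 j) //= !mxE (negbTE i0) (negbTE j0) eqxx mulr1 big1 ?addr0.
  by rewrite addrC subrK.
move=> k /andP[k0 kj]; rewrite !mxE (negbTE i0) (negbTE k0) (negbTE kj) /=.
by rewrite mulr0.
Qed.

Lemma char_poly_deflate : char_poly A = ('X - mu%:P) * char_poly deflate.
Proof.
rewrite (char_poly_similar _ deflation_basis_conj); last first.
  by rewrite det_deflation_basis oner_eq0.
rewrite /char_poly (expand_det_row _ 0) (bigD1 0) //= big1 ?addr0; last first.
  by move=> k k0; rewrite !mxE eqxx (negbTE k0) eq_sym (negbTE k0) /= subr0 mul0r.
rewrite !mxE eqxx /cofactor addn0 expr0 mul1r row'_col'_char_poly_mx.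
congr (_ * \det (char_poly_mx _)); apply/matrixP => i j.
by rewrite !mxE ![lift 0 _ == 0]eq_sym !(negbTE (neq_lift _ _)).
Qed.

End Deflation.

Section DominantCorner.
Variables (R : rcfType) (eps : R) (n : nat) (A : 'M[R[i]]_n.+1).
Hypotheses (eps_gt0 : 0 < eps) (eps_lt : 3 * eps < 1)
  (A_ge0 : forall i j, 0 <= A i j) (A00 : A 0 0 = (1 - eps)%:C)
  (A_sum : \sum_(i < n.+1) \sum_(j < n.+1) A i j = 1).

Local Notation a i j := (normc (A i j)).

Definition col_tail k := \sum_(i | i != 0) a i k.

Lemma a00 : a 0 0 = 1 - eps.
Proof. by rewrite A00 ger0_normc // ler0c; move: eps_gt0 eps_lt; lra. Qed.

Lemma col_tail_ge0 k : 0 <= col_tail k.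
Proof. by rewrite sumr_ge0 // => i _; rewrite normc_ge0. Qed.

Lemma col_tail_split k : \sum_i a i k = a 0 k + col_tail k.
Proof. exact: bigD1. Qed.

Lemma col_tail_corner k : k != 0 -> col_tail 0 + a 0 k + col_tail k <= eps.
Proof.
move=> k_neq0.
have total : \sum_j (a 0 j + col_tail j) = 1.
  under eq_bigr do rewrite -col_tail_split.
  rewrite exchange_big /=.
  under eq_bigr do under eq_bigr do rewrite ger0_normc //.
  rewrite -[RHS](congr1 (@complex.Re R) A_sum) !raddf_sum.
  by under [RHS]eq_bigr do rewrite raddf_sum.
move: total; rewrite (bigD1 0) //= (bigD1 k) //= a00 addrA => total.
have : 0 <= \sum_(j | (j != 0) && (j != k)) (a 0 j + col_tail j).
  by rewrite sumr_ge0 // => j _; rewrite addr_ge0 ?normc_ge0 ?col_tail_ge0.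
lra.
Qed.

Definition dominant_left_eigvec (lam : R[i]) (w : 'rV[R[i]]_n.+1) :=
  [/\ w *m A = lam *: w, w 0 0 = 1 & forall j, normc (w 0 j) <= 1].

Lemma eigenvalue_small_or_dominant lam : eigenvalue A lam ->
  normc lam <= eps \/ exists w, dominant_left_eigvec lam w.
Proof.
case/eigenvalue_max_left_eigvec => v [k [vA vk_neq0 vk_max]].
have [k0|k_neq0] := eqVneq k 0.
  by right; subst k; exact: left_eigvec_normalize vA vk_neq0 vk_max.
left; apply: le_trans (normc_eigenvalue_le_col vA vk_neq0 vk_max) _.
have := col_tail_corner k_neq0; have := col_tail_ge0 0.
by rewrite col_tail_split; lra.
Qed.

Lemma dominant_near_corner lam w : dominant_left_eigvec lam w ->
  normc (lam - A 0 0) <= eps ^+ 2 / (1 - 2 * eps).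
Proof.
case=> wA w0 w_le1; have e3 := eps_lt; rewrite ler_pdivlMr; last by lra.
set X := normc (lam - A 0 0); have X_ge0 : 0 <= X := normc_ge0 _.
have X_le : X <= \sum_(i | i != 0) normc (w 0 i) * a i 0.
  by have := normc_left_eigen_col_diag 0 wA; rewrite w0 normc1 mulr1.
have [[k k_neq0 kmax]|no_tail] :=
  arg_max_or_none (fun i => i != 0) (fun i => normc (w 0 i)); last first.
  by move: X_le; rewrite big_pred0 => [?|i]; [nra | exact/negbTE/no_tail].
set M := normc (w 0 k); have M_ge0 : 0 <= M := normc_ge0 _.
have X_M : X <= M * col_tail 0.
  apply: le_trans X_le _; rewrite /col_tail big_distrr /=.
  by apply: ler_sum => i i_neq0; rewrite ler_wpM2r ?normc_ge0 ?kmax.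
have lam_M : normc lam * M <= a 0 k + M * col_tail k.
  apply: le_trans (normc_left_eigen_col k wA) _.
  rewrite (bigD1 0) //= w0 normc1 mul1r lerD2l /col_tail big_distrr /=.
  by apply: ler_sum => i i_neq0; rewrite ler_wpM2r ?normc_ge0 ?kmax.
have lam_ge : 1 - eps - X <= normc lam by rewrite -a00 lerB_normc.
have corner := col_tail_corner k_neq0.
have t0 := col_tail_ge0 0; have tk := col_tail_ge0 k.
have a0k := normc_ge0 (A 0 k).
have X_le_t0 : X <= col_tail 0 by move: (w_le1 k); rewrite -/M; nra.
have M_bound : (1 - 2 * eps) * M <= a 0 k.
  have : (1 - eps - X) * M <= normc lam * M by rewrite ler_wpM2r.
  have : (1 - 2 * eps) * M <= (1 - eps - X - col_tail k) * M.
    by rewrite ler_wpM2r //; lra.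
  lra.
nra.
Qed.

Lemma deflate_eigenvalue_le mu w lam :
  dominant_left_eigvec mu w -> eps <= normc mu ->
  eigenvalue (deflate A w) lam -> normc lam <= eps.
Proof.
case=> wA w0 w_le1 mu_ge /gershgorin_col[k lam_le]; apply: le_trans lam_le _.
set K := lift 0 k; have K_neq0 : K != 0 by rewrite eq_sym neq_lift.
have wK : normc mu * normc (w 0 K) <= a 0 K + col_tail K.
  apply: le_trans (normc_left_eigen_col K wA) _; rewrite -col_tail_split.
  by apply: ler_sum => i _; rewrite ler_piMl ?normc_ge0.
have col_defl :
    \sum_i normc (deflate A w i k) <= col_tail K + col_tail 0 * normc (w 0 K).
  rewrite /col_tail -!sum_lift0 big_distrl -big_split /=; apply: ler_sum => i _.
  by rewrite mxE (le_trans (le_normcD _ _)) // normcN normcM.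
apply: le_trans col_defl _.
have corner := col_tail_corner K_neq0.
have t0 := col_tail_ge0 0; have tK := col_tail_ge0 K.
have a0K := normc_ge0 (A 0 K).
have wK_ge0 := normc_ge0 (w 0 K).
have mu_gt0 : 0 < normc mu by move: eps_gt0; lra.
rewrite -(ler_pM2l mu_gt0).
have : col_tail 0 * (normc mu * normc (w 0 K)) <=
       col_tail 0 * (a 0 K + col_tail K) by rewrite ler_wpM2l.
have : col_tail 0 * (eps - col_tail 0) <= col_tail 0 * normc mu.
  by rewrite ler_wpM2l //; lra.
nra.
Qed.

Lemma exists_eigenvalue_gt_eps : exists2 mu, eigenvalue A mu & eps < normc mu.
Proof.
have [mu mu_eig tr_le] := exists_eigenvalue_mxtrace_exp_le A n.+1.
exists mu => //; rewrite ltNge; apply/negP => mu_le.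
have e0 := eps_gt0; have e3 := eps_lt.
have tr_ge : (1 - eps) ^+ n.+1 <= normc (\tr (A ^+ n.+1)).
  apply: lecC_normc; rewrite rmorphXn /= -A00.
  apply: le_trans (exp_mx_diag_ge A_ge0 n.+1 0) _.
  by rewrite /mxtrace (bigD1 0) //= lerDl sumr_ge0 // => i _; rewrite exp_mx_ge0.
have mu_eps : n.+1%:R * normc mu ^+ n.+1 <= n.+1%:R * eps ^+ n.+1.
  by rewrite ler_wpM2l //; apply: lerXn2r; rewrite ?nnegrE ?normc_ge0 ?(ltW e0).
have eps_2eps : n.+1%:R * eps ^+ n.+1 < (2 * eps) ^+ n.+1.
  by rewrite exprMn ltr_pM2r ?exprn_gt0 // -natrX ltr_nat ltn_expl.
have two_eps_le : (2 * eps) ^+ n.+1 <= (1 - eps) ^+ n.+1.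
  by apply: lerXn2r; rewrite ?nnegrE; lra.
have := le_trans tr_ge (le_trans tr_le mu_eps).
by rewrite leNgt (lt_le_trans eps_2eps two_eps_le).
Qed.

Lemma near_corner_gt_eps lam :
  normc (lam - A 0 0) <= eps ^+ 2 / (1 - 2 * eps) -> eps < normc lam.
Proof.
have e0 := eps_gt0; have e3 := eps_lt; move=> near.
have rr_lt : eps ^+ 2 / (1 - 2 * eps) < 1 - 2 * eps by rewrite ltr_pdivrMr; nra.
by have := lerB_normc lam (A 0 0); rewrite a00; lra.
Qed.

End DominantCorner.

Theorem theorem8 (R : realType) (eps : R) (n : nat) (A : 'M[R[i]]_(n.+1)) :
  0 < eps -> eps < 3^-1 ->
  (forall i j, 0 <= A i j) ->
  A ord0 ord0 = (1 - eps)%:C ->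
  \sum_(i < n.+1) \sum_(j < n.+1) A i j = 1 ->
  exists mu : R[i],
    [/\ eigenvalue A mu /\ mup mu (char_poly A) = 1%N,
        `|mu - A ord0 ord0| <= (eps ^+ 2 / (1 - 2 * eps))%:C,
        (forall lam, eigenvalue A lam ->
           `|lam - A ord0 ord0| <= (eps ^+ 2 / (1 - 2 * eps))%:C -> lam = mu),
        (forall lam, eigenvalue A lam -> lam != mu -> `|lam| <= eps%:C)
      & (forall lam, eigenvalue A lam -> lam != mu -> `|lam| < `|mu|)].
Proof.
move=> eps_gt0 eps_lt A_ge0 A00 A_sum.
have {}eps_lt : 3 * eps < 1 by rewrite mulrC -ltr_pdivlMr ?div1r.
have [mu mu_eig mu_gt] := exists_eigenvalue_gt_eps eps_gt0 eps_lt A_ge0 A00.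
have [mu_le|[w w_dom]] :=
  eigenvalue_small_or_dominant eps_gt0 eps_lt A_ge0 A00 A_sum mu_eig.
  by move: mu_gt; rewrite ltNge mu_le.
have defl_le :=
  deflate_eigenvalue_le eps_gt0 eps_lt A_ge0 A00 A_sum w_dom (ltW mu_gt).
have [wA w0 _] := w_dom; have charA := char_poly_deflate wA w0.
have others lam : eigenvalue A lam -> lam != mu -> normc lam <= eps.
  move=> lam_eig lam_neq; apply: defl_le; move: lam_eig.
  by rewrite !eigenvalue_root_char charA rootM root_XsubC (negbTE lam_neq).
have mu_near := dominant_near_corner eps_gt0 eps_lt A_ge0 A00 A_sum w_dom.
have near_gt := near_corner_gt_eps eps_gt0 eps_lt A00.
exists mu; split.
- split=> //; rewrite charA mupMl; last first.
    rewrite -eigenvalue_root_char.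
    by apply: contraTN mu_gt => /defl_le; rewrite -leNgt.
  by have := mup_XsubCX 1 mu mu; rewrite expr1 eqxx.
- by rewrite ler_normcC.
- move=> lam lam_eig; rewrite ler_normcC => /near_gt lam_gt; apply/eqP.
  by apply: contraTT lam_gt => /(others _ lam_eig); rewrite -leNgt.
- by move=> lam lam_eig lam_neq; rewrite ler_normcC others.
- move=> lam lam_eig lam_neq; rewrite !normr_normc ltcR.
  exact: le_lt_trans (others _ lam_eig lam_neq) mu_gt.
Qed.
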